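(* Let $Y_1,Y_2,\ldots$ be i.i.d. Bernoulli$(1/2)$ and let $(Z^k)_k$ be generated by the bit-drop scheme described in the context, independently of $(Y_i)$. For $0\le k\le n$ let $L^a_n(k)$ be the length of a longest common subsequence of $Z^k$ and $Y_1\ldots Y_n$. Let $E^n_1:=\bigcap_{k=1}^{\lfloor 0.45n\rfloor}\{L^a_n(k)=k\}$. Then $\lim_{n\to\infty}P(E^n_1)=1$.
   Context: Bit-drop scheme: let $V_1,V_2,\ldots$ be i.i.d. Bernoulli$(1/2)$ and let $T_3,T_4,\ldots$ be independent, independent of $(V_k)$, with $T_{k+1}$ uniform on $\{2,\ldots,k\}$. Set $Z^2:=V_1V_2$ and, given $Z^k=Z^k_1\ldots Z^k_k$, define $Z^{k+1}_j:=Z^k_j$ for $j<T_{k+1}$, $Z^{k+1}_{T_{k+1}}:=V_{k+1}$, $Z^{k+1}_j:=Z^k_{j-1}$ for $T_{k+1}<j\le k+1$. Convention: $Z^0$ empty, $Z^1:=V_1$. *)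

From HB Require Import structures.
From mathcomp Require Import all_boot all_order all_algebra.
From mathcomp Require Import all_classical all_reals all_analysis.
Set Implicit Arguments. Unset Strict Implicit. Unset Printing Implicit Defensive.
Import Order.TTheory GRing.Theory Num.Theory.

(* V j = V_j (1-based), T j = T_j (1-based, used for j >= 3).
   Z^0 = [::], Z^1 = V_1, Z^2 = V_1 V_2, and for k >= 2, Z^{k+1} is Z^k with
   V_{k+1} inserted so that it becomes the T_{k+1}-th letter (1-based). *)
Fixpoint bitdrop (V : nat -> bool) (T : nat -> nat) (k : nat) : seq bool :=
  match k with
  | 0 => [::]
  | k'.+1 =>
      if (k' < 2)%N then rcons (bitdrop V T k') (V k)
      else let s := bitdrop V T k' in
           take (T k).-1 s ++ V k :: drop (T k).-1 s
  end.

Definition lcs (s t : seq bool) : nat :=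
  \max_(m : (size s).-tuple bool | subseq (mask m s) t) size (mask m s).

(* All possible values [:: T_3; ...; T_k] of the drop positions up to step k,
   each value T_{j+1} ranging over {2, ..., j}; every combination listed once. *)
Fixpoint tseqs (k : nat) : seq (seq nat) :=
  match k with
  | 0 => [:: [::]]
  | k'.+1 =>
      if (k' < 2)%N then tseqs k'
      else [seq rcons s t | s <- tseqs k', t <- iota 2 (k'.-1)]
  end.

Definition mE1 (n : nat) : nat := (45 * n %/ 100)%N.

(* Finite sample space carrying (Y_1..Y_n, V_1..V_m, T_3..T_m): the uniform
   measure on it is exactly the joint law of these independent variables. *)
Definition outcomes (n : nat) : seq (seq bool * seq bool * seq nat) :=
  flatten [seq flatten [seq [seq (val y, val v, t) | t <- tseqs (mE1 n)]
                     | v <- enum [set: (mE1 n).-tuple bool]]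
          | y <- enum [set: n.-tuple bool]].

Definition E1 (n : nat) (w : seq bool * seq bool * seq nat) : bool :=
  let: (y, v, t) := w in
  let Vf := fun j => nth false v j.-1 in
  let Tf := fun j => nth 0%N t (j - 3) in
  all (fun k => lcs (bitdrop Vf Tf k) y == k) (iota 1 (mE1 n)).

Definition probE1 (R : realType) (n : nat) : R :=
  ((count (E1 n) (outcomes n))%:R / (size (outcomes n))%:R)%R.

From HB Require Import structures.
From mathcomp Require Import all_boot all_order all_algebra.
From mathcomp Require Import all_classical all_reals all_analysis.
From mathcomp Require Import zify ring.
Import Order.TTheory GRing.Theory Num.Theory numFieldNormedType.Exports.

(* The bit-drop scheme only permutes V_1, ..., V_k, by a permutation that does
   not depend on V; hence Z^m, m = floor(0.45 n), is a uniform random word of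
   length m independent of Y, and every Z^k with k <= m is a subsequence of
   Z^m, so that E^n_1 contains the event "Z^m is a subsequence of Y".  For a
   fixed word z, splitting on the first letter of y shows that the words
   y in {0,1}^n containing z as a subsequence are exactly as many as those
   having at least |z| ones.  By Chebyshev's inequality the proportion of y
   with fewer than 0.45 n ones is at most (n/4) / (0.05 n)^2 = 100/n. *)

Fixpoint bitdrop_idx (T : nat -> nat) (k : nat) : seq nat :=
  match k with
  | 0 => [::]
  | k'.+1 =>
      if (k' < 2)%N then rcons (bitdrop_idx T k') k
      else let s := bitdrop_idx T k' in
           take (T k).-1 s ++ k :: drop (T k).-1 s
  end.

Lemma bitdropE V T k : bitdrop V T k = map V (bitdrop_idx T k).
Proof.
elim: k => [//|k IHk] /=; case: ifP => _; first by rewrite IHk map_rcons.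
by rewrite IHk map_cat map_take /= map_drop.
Qed.

Lemma perm_bitdrop_idx T k : perm_eq (bitdrop_idx T k) (iota 1 k).
Proof.
elim: k => [//|k IHk].
have -> : iota 1 k.+1 = rcons (iota 1 k) k.+1.
  by rewrite -cats1 -(addn1 k) iotaD add1n /= addn1.
rewrite /=; case: ifP => _.
  by rewrite -!cats1 perm_cat2r.
rewrite -cat1s perm_catCA cat_take_drop -cats1 perm_sym perm_catC /=.
by rewrite perm_cons perm_sym.
Qed.

Lemma size_bitdrop V T k : size (bitdrop V T k) = k.
Proof.
by rewrite bitdropE size_map (perm_size (perm_bitdrop_idx T k)) size_iota.
Qed.

Lemma subseq_bitdropS V T k : subseq (bitdrop V T k) (bitdrop V T k.+1).
Proof.
rewrite [X in subseq _ X]/=; case: ifP => _.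
  by rewrite -cats1 prefix_subseq.
rewrite -{1}(cat_take_drop (T k.+1).-1 (bitdrop V T k)).
by apply: cat_subseq => //; apply: subseq_cons.
Qed.

Lemma subseq_bitdrop V T j k : j <= k -> subseq (bitdrop V T j) (bitdrop V T k).
Proof.
move=> /subnK <-; elim: (k - j) => [|d IHd]; first by rewrite add0n.
by rewrite addSn; apply: subseq_trans IHd (subseq_bitdropS _ _ _).
Qed.

Lemma lcs_subseq s t : subseq s t -> lcs s t = size s.
Proof.
move=> st; apply/eqP; rewrite eqn_leq; apply/andP; split.
  apply/bigmax_leqP => m _.
  by rewrite size_mask ?size_tuple // -{2}(size_tuple m) count_size.
have := @leq_bigmax_cond _ (fun m : (size s).-tuple bool => subseq (mask m s) t)
   (fun m => size (mask m s)) (nseq_tuple (size s) true).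
by rewrite /lcs mask_true //; apply.
Qed.

Lemma cons_inj (T : Type) (a : T) : injective (cons a).
Proof. by move=> x y []. Qed.

Lemma count_sum (T : Type) (P : pred T) (s : seq T) :
  count P s = \sum_(x <- s) P x.
Proof. by elim: s => [|x s IHs]; rewrite ?big_nil // big_cons -IHs. Qed.

Fixpoint bitseqs (n : nat) : seq (seq bool) :=
  if n is n'.+1 then map (cons true) (bitseqs n') ++ map (cons false) (bitseqs n')
  else [:: [::]].

Lemma size_bitseqs n : size (bitseqs n) = 2 ^ n.
Proof.
by elim: n => //= n IHn; rewrite size_cat !size_map IHn expnS mul2n addnn.
Qed.

Lemma mem_bitseqs n y : (y \in bitseqs n) = (size y == n).
Proof.
elim: n y => [|n IHn] [|b y] //=; rewrite mem_cat.
  by apply/orP => -[] /mapP [].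
rewrite eqSS -IHn; case: b; rewrite (mem_map (@cons_inj _ _)).
  by case: (y \in bitseqs n) => //=; apply/mapP => -[].
by rewrite orbC; case: (y \in bitseqs n) => //=; apply/mapP => -[].
Qed.

Lemma uniq_bitseqs n : uniq (bitseqs n).
Proof.
elim: n => //= n IHn.
rewrite cat_uniq !(map_inj_uniq (@cons_inj _ _)) IHn /= andbT.
by apply/hasP => -[_ /mapP [y _ ->] /mapP [z _]].
Qed.

Lemma perm_enum_tuple_bitseqs n :
  perm_eq (map val (enum [set: n.-tuple bool])) (bitseqs n).
Proof.
apply: uniq_perm; first by rewrite map_inj_uniq ?enum_uniq //; exact: val_inj.
  exact: uniq_bitseqs.
move=> y; rewrite mem_bitseqs; apply/mapP/eqP => [[t _ ->]|sz_y].
  exact: size_tuple.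
by exists (Tuple (introT eqP sz_y)) => //; rewrite mem_enum inE.
Qed.

Lemma count_subseq_bitseqs n z :
  count (subseq z) (bitseqs n) = count (fun y => size z <= count id y) (bitseqs n).
Proof.
elim: n z => [|n IHn] [|a z] //=; rewrite !count_cat !count_map.
  by congr (_ + _); apply: eq_count.
have -> : count (preim (cons true) (subseq (a :: z))) (bitseqs n)
        + count (preim (cons false) (subseq (a :: z))) (bitseqs n)
        = count (subseq z) (bitseqs n) + count (subseq (a :: z)) (bitseqs n).
  by case: a; [|rewrite addnC]; congr (_ + _); apply: eq_count => y /=.
by rewrite !IHn; congr (_ + _); apply: eq_count.
Qed.

Lemma count_not_subseq_bitseqs n z :
  count (predC (subseq z)) (bitseqs n)
  = count (fun y => count id y < size z) (bitseqs n).
Proof.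
apply/eqP; rewrite -(eqn_add2l (count (subseq z) (bitseqs n))) count_predC.
rewrite count_subseq_bitseqs -(count_predC (fun y => size z <= count id y)).
by apply/eqP; congr (_ + _); apply: eq_count => y /=; rewrite ltnNge.
Qed.

Section Chebyshev.
Local Open Scope ring_scope.

Lemma sum_sqr_dev_bitseqs n :
  \sum_(y <- bitseqs n) (n%:Z - 2 * (count id y)%:Z) ^+ 2 = (n * 2 ^ n)%N%:Z.
Proof.
elim: n => [|n IHn]; first by rewrite /= big_seq1.
rewrite /= big_cat !big_map /= -big_split /=.
rewrite (eq_bigr (fun y => 2 * (n%:Z - 2 * (count id y)%:Z) ^+ 2 + 2)); last first.
  by move=> y _; rewrite /= !PoszD; ring.
rewrite big_split /= -mulr_sumr IHn big_const_seq count_predT iter_addr_0.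
by rewrite size_bitseqs expnS !PoszM pmulrn; ring.
Qed.

Lemma count_mul_le_sum (R : numDomainType) (T : Type) (P : pred T) (f : T -> R)
    (a : R) (s : seq T) :
  (forall x, 0 <= f x) -> (forall x, P x -> a <= f x) ->
  (count P s)%:R * a <= \sum_(x <- s) f x.
Proof.
move=> f_ge0 f_ge_a; elim: s => [|x s IHs]; first by rewrite big_nil mul0r.
rewrite big_cons /= natrD mulrDl lerD //.
by case: (P x) (f_ge_a x) => /= [/(_ isT)|_]; rewrite ?mul1r ?mul0r.
Qed.

Lemma sqr_le_dev_few_ones n c :
  (c < mE1 n)%N -> n%:Z ^+ 2 <= 100 * (n%:Z - 2 * c%:Z) ^+ 2.
Proof.
rewrite /mE1 => c_lt.
have [gap c_le] : (n <= 10 * (n - 2 * c))%N /\ (2 * c <= n)%N by lia.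
by rewrite !expr2; nia.
Qed.

End Chebyshev.

Lemma count_few_ones_bitseqs n :
  count (fun y => count id y < mE1 n) (bitseqs n) * n <= 100 * 2 ^ n.
Proof.
set B := count _ _.
have cheb : B * n * n <= 100 * 2 ^ n * n.
  rewrite -lez_nat mulnAC !PoszM -[X in (_ <= X)%R]mulrA.
  have := sum_sqr_dev_bitseqs n; rewrite PoszM => <-.
  rewrite mulr_sumr -mulrA -expr2 -(natz B).
  apply: count_mul_le_sum => y; last exact: sqr_le_dev_few_ones.
  by rewrite mulr_ge0 ?sqr_ge0.
have [->|n_gt0] := posnP n; first by rewrite muln0.
by rewrite -(leq_pmul2r n_gt0).
Qed.

Lemma perm_reindex_bitseqs m p : perm_eq p (iota 1 m) ->
  perm_eq [seq [seq nth false v j.-1 | j <- p] | v <- bitseqs m] (bitseqs m).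
Proof.
move=> pp; set phi := fun v => _.
have phi_inj : {in bitseqs m &, injective phi}.
  move=> v1 v2; rewrite !mem_bitseqs => /eqP sz1 /eqP sz2 eq_phi.
  apply: (@eq_from_nth _ false); first by rewrite sz1 sz2.
  move=> i; rewrite sz1 => lt_im.
  have ip : i.+1 \in p by rewrite (perm_mem pp) mem_iota; apply/andP.
  have := congr1 (nth false ^~ (index i.+1 p)) eq_phi.
  by rewrite /phi /= !(nth_map 0) ?index_mem // nth_index.
have uniq_phi : uniq (map phi (bitseqs m)).
  by rewrite (map_inj_in_uniq phi_inj) uniq_bitseqs.
apply: uniq_perm => //; first exact: uniq_bitseqs.
apply: (uniq_min_size uniq_phi _ _).2; last by rewrite size_map.
by move=> _ /mapP [v _ ->]; rewrite mem_bitseqs size_map (perm_size pp) size_iota.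
Qed.

Lemma sum_outcomes n (F : seq bool * seq bool * seq nat -> nat) :
  \sum_(w <- outcomes n) F w =
  \sum_(y <- bitseqs n) \sum_(v <- bitseqs (mE1 n)) \sum_(t <- tseqs (mE1 n))
    F (y, v, t).
Proof.
rewrite /outcomes big_flatten big_map -(perm_big _ (perm_enum_tuple_bitseqs n)).
rewrite big_map; apply: eq_bigr => y _.
rewrite big_flatten big_map -(perm_big _ (perm_enum_tuple_bitseqs (mE1 n))).
by rewrite big_map; apply: eq_bigr => v _; rewrite big_map.
Qed.

Lemma count_outcomes n (P : pred (seq bool * seq bool * seq nat)) :
  count P (outcomes n) =
  \sum_(y <- bitseqs n) \sum_(v <- bitseqs (mE1 n)) \sum_(t <- tseqs (mE1 n))
    P (y, v, t).
Proof. by rewrite count_sum sum_outcomes. Qed.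

Lemma size_outcomes n :
  size (outcomes n) = 2 ^ n * 2 ^ mE1 n * size (tseqs (mE1 n)).
Proof.
rewrite -count_predT count_outcomes.
under eq_bigr do under eq_bigr do rewrite sum1_size.
rewrite !big_const_seq !count_predT !iter_addn_0 !size_bitseqs.
by rewrite mulnC [_ * 2 ^ _]mulnC mulnA.
Qed.

Lemma size_tseqs_gt0 k : 0 < size (tseqs k).
Proof.
elim: k => [//|k IHk] /=; case: ifP => // /negbT; rewrite -leqNgt => k_ge2.
by rewrite size_allpairs muln_gt0 IHk size_iota; case: k k_ge2 IHk => [|[|k]].
Qed.

Lemma sum_count_not_subseq n m :
  \sum_(y <- bitseqs n) count (predC (subseq ^~ y)) (bitseqs m)
  = 2 ^ m * count (fun y => count id y < m) (bitseqs n).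
Proof.
under eq_bigr do rewrite count_sum.
rewrite exchange_big /=.
rewrite (eq_big_seq (fun=> count (fun y => count id y < m) (bitseqs n))).
  by rewrite big_const_seq count_predT iter_addn_0 size_bitseqs mulnC.
move=> z; rewrite mem_bitseqs => /eqP <-.
by rewrite -count_not_subseq_bitseqs count_sum.
Qed.

Definition Zm_subseq n (w : seq bool * seq bool * seq nat) : bool :=
  let: (y, v, t) := w in
  subseq (bitdrop (fun j => nth false v j.-1) (fun j => nth 0 t (j - 3)) (mE1 n)) y.

Lemma Zm_subseq_E1 n w : Zm_subseq n w -> E1 n w.
Proof.
case: w => [[y v] t] /= Zm_y; apply/allP => k; rewrite mem_iota add1n.
case/andP => _ k_le; rewrite lcs_subseq ?size_bitdrop //.
by apply: subseq_trans Zm_y; apply: subseq_bitdrop.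
Qed.

Lemma count_not_Zm_subseq n :
  count (predC (Zm_subseq n)) (outcomes n) =
  size (tseqs (mE1 n)) * (2 ^ mE1 n * count (fun y => count id y < mE1 n) (bitseqs n)).
Proof.
set m := mE1 n; rewrite count_outcomes.
transitivity (\sum_(y <- bitseqs n) \sum_(t <- tseqs m)
                count (predC (subseq ^~ y)) (bitseqs m)).
  apply: eq_bigr => y _; rewrite exchange_big; apply: eq_bigr => t _ /=.
  have reindex := perm_reindex_bitseqs _ _ (perm_bitdrop_idx (fun j => nth 0 t (j - 3)) m).
  rewrite count_sum -[RHS](perm_big _ reindex) big_map.
  by apply: eq_bigr => v _; rewrite /= bitdropE.
rewrite -sum_count_not_subseq big_distrr /=; apply: eq_bigr => y _.
by rewrite big_const_seq count_predT iter_addn_0 mulnC.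
Qed.

Lemma count_not_E1 n :
  (size (outcomes n) - count (E1 n) (outcomes n)) * n <= 100 * size (outcomes n).
Proof.
have le_E1 := sub_count (@Zm_subseq_E1 n) (outcomes n).
have not_Zm := count_predC (Zm_subseq n) (outcomes n).
apply: (@leq_trans (count (predC (Zm_subseq n)) (outcomes n) * n)).
  by rewrite leq_mul2r; apply/orP; right; lia.
rewrite count_not_Zm_subseq size_outcomes.
have := leq_mul (leqnn (size (tseqs (mE1 n)) * 2 ^ mE1 n)) (count_few_ones_bitseqs n).
by nia.
Qed.

Local Open Scope ring_scope.

Lemma probE1_bounds (R : realType) n : (0 < n)%N ->
  1 - 100 / n%:R <= probE1 R n <= 1.
Proof.
move=> n_gt0; rewrite /probE1.
set N := size (outcomes n); set C := count (E1 n) (outcomes n).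
have N_gt0 : (0 < N)%N.
  by rewrite /N size_outcomes !muln_gt0 !expn_gt0 size_tseqs_gt0.
have C_le : (C <= N)%N by exact: count_size.
have bound : (N%:R - C%:R) * n%:R <= 100 * N%:R :> R.
  have -> : 100 * N%:R = (100 * N)%N%:R :> R by rewrite natrM.
  by rewrite -natrB // -natrM ler_nat count_not_E1.
have Nr : (0 : R) < N%:R by rewrite ltr0n.
have nr : (0 : R) < n%:R by rewrite ltr0n.
rewrite ler_pdivrMr // mul1r ler_nat C_le andbT.
rewrite lerBlDr -lerBlDl -[X in X - _](divff (lt0r_neq0 Nr)) -mulrBl.
by rewrite !ler_pdivrMr // mulrAC ler_pdivlMr.
Qed.

Local Open Scope classical_set_scope.

Theorem lemma6 (R : realType) : probE1 R n @[n --> \oo] --> (1 : R).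
Proof.
apply/cvgrPdist_le => e e_gt0; near=> n.
have n_gt0 : (0 < n)%N by near: n; exact: nbhs_infty_gt.
have /andP [lower upper] := probE1_bounds R n n_gt0.
rewrite ger0_norm ?subr_ge0 // lerBlDr -lerBlDl; apply: le_trans lower.
rewrite lerD2l lerN2 ler_pdivrMr ?ltr0n // mulrC -ler_pdivrMr //.
by near: n; exact: nbhs_infty_ger.
Unshelve. all: by end_near.
Qed.
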